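(* Let $\mathcal{G}$ be a multi-layer graph with $l$ layers, $d,k\in\mathbb{N}$ with $k\ge1$, and $\mathcal{R}$ a collection of exactly $k$ subsets of $V(\mathcal{G})$. Let $L\subseteq\{1,\dots,l\}$ and $j>\max(L)$. If $|\mathsf{Cov}((\mathcal{R}-\{C^*(\mathcal{R})\})\cup\{C^d_{L\cup\{j\}}(\mathcal{G})\})|<(1+\frac1k)|\mathsf{Cov}(\mathcal{R})|$, then for every $L'$ with $L\subseteq L'\subseteq\{1,\dots,l\}$, $|\mathsf{Cov}((\mathcal{R}-\{C^*(\mathcal{R})\})\cup\{C^d_{L'\cup\{j\}}(\mathcal{G})\})|<(1+\frac1k)|\mathsf{Cov}(\mathcal{R})|$.
   Context: A multi-layer graph $\mathcal{G}=(V,E_1,\dots,E_l)$ consists of a finite vertex set $V$ and edge sets $E_i$ of simple undirected graphs $G_i=(V,E_i)$. A graph is $d$-dense if every vertex has degree at least $d$; the $d$-coherent core $C^d_L(\mathcal{G})$ is the unique maximal $S\subseteq V$ such that the induced subgraph $G_i[S]$ is $d$-dense for all $i\in L$. $\max(\emptyset)=-\infty$. For a collection $\mathcal{R}$ of sets, $\mathsf{Cov}(\mathcal{R})=\bigcup_{R\in\mathcal{R}}R$; for $C'\in\mathcal{R}$, $\Delta(\mathcal{R},C')=C'-\mathsf{Cov}(\mathcal{R}-\{C'\})$; $C^*(\mathcal{R})$ is a fixed element of $\mathcal{R}$ minimizing $|\Delta(\mathcal{R},C')|$. *)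

From mathcomp Require Import all_boot all_order all_algebra.
Set Implicit Arguments. Unset Strict Implicit. Unset Printing Implicit Defensive.

(* A multi-layer graph on the finite vertex type V with l layers is given by
   E : 'I_l -> rel V, each E i symmetric and irreflexive (a simple graph).
   Layers are indexed 0..l-1 (shifted from the paper's 1..l). *)

Definition simple_graph (V : finType) (e : rel V) : Prop :=
  irreflexive e /\ symmetric e.

Definition dense_in (V : finType) (e : rel V) (d : nat) (S : {set V}) : bool :=
  [forall v in S, d <= #|[set u in S | e v u]|].

Definition coherent (V : finType) (l : nat) (E : 'I_l -> rel V) (d : nat)
  (L : {set 'I_l}) (S : {set V}) : bool :=
  [forall i in L, dense_in (E i) d S].

(* The d-coherent core: the unique maximal coherent set, realised as the
   union of all coherent sets (coherence is closed under union). *)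
Definition core (V : finType) (l : nat) (E : 'I_l -> rel V) (d : nat)
  (L : {set 'I_l}) : {set V} :=
  \bigcup_(S : {set V} | coherent E d L S) S.

Definition Cov (V : finType) (R : {set {set V}}) : {set V} :=
  \bigcup_(C in R) C.

Definition Delta (V : finType) (R : {set {set V}}) (C : {set V}) : {set V} :=
  C :\: Cov (R :\ C).

From mathcomp Require Import all_boot all_order all_algebra.
Import Order.POrderTheory GRing.Theory Num.Theory.
Local Open Scope ring_scope.

(* Coherence for more layers is a stronger requirement, so the coherent core
   only shrinks as the layer set grows; replacing one member of a collection by
   a subset of it shrinks the cover, and the strict bound is inherited. *)

Section CoherentCore.

Variables (V : finType) (l : nat) (E : 'I_l -> rel V) (d : nat).

Lemma coherentS (A B : {set 'I_l}) (S : {set V}) :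
  A \subset B -> coherent E d B S -> coherent E d A S.
Proof.
move=> sAB /forall_inP cohB; apply/forall_inP => i iA.
exact/cohB/(subsetP sAB).
Qed.

Lemma coreS (A B : {set 'I_l}) : A \subset B -> core E d B \subset core E d A.
Proof.
move=> sAB; apply/bigcupsP => S cohS.
by apply: bigcup_sup; apply: coherentS cohS.
Qed.

End CoherentCore.

Lemma Cov_setU1 (V : finType) (R : {set {set V}}) (C : {set V}) :
  Cov (R :|: [set C]) = Cov R :|: C.
Proof. by rewrite /Cov bigcup_setU big_set1. Qed.

Lemma Cov_setU1S (V : finType) (R : {set {set V}}) (C1 C2 : {set V}) :
  C1 \subset C2 -> Cov (R :|: [set C1]) \subset Cov (R :|: [set C2]).
Proof. by move=> sC; rewrite !Cov_setU1 setUS. Qed.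

Theorem lemma4 (V : finType) (l : nat) (E : 'I_l -> rel V)
  (HE : forall i, simple_graph (E i)) (d k : nat) (hk : (1 <= k)%N)
  (R : {set {set V}}) (hR : #|R| = k)
  (Cstar : {set V}) (hCR : Cstar \in R)
  (hCmin : forall C, C \in R -> (#|Delta R Cstar| <= #|Delta R C|)%N)
  (L : {set 'I_l}) (j : 'I_l) (hj : forall i, i \in L -> (i < j)%N) :
  (#|Cov ((R :\ Cstar) :|: [set core E d (j |: L)])|%:R : rat)
      < (1 + (k%:R)^-1) * #|Cov R|%:R ->
  forall L' : {set 'I_l}, L \subset L' ->
  (#|Cov ((R :\ Cstar) :|: [set core E d (j |: L')])|%:R : rat)
      < (1 + (k%:R)^-1) * #|Cov R|%:R.
Proof.
move=> bound_L L' sLL'; apply: le_lt_trans bound_L.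
by rewrite ler_nat subset_leq_card // Cov_setU1S // coreS // setUS.
Qed.
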